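(* Let $p$ be a prime and let $s(n)_{n\ge0}$ be a sequence of $p$-adic integers satisfying $s(n+\ell)+a_{\ell-1}s(n+\ell-1)+\cdots+a_0s(n)=0$ for all $n\ge0$ with $a_i\in\mathbb{Z}_p$; let $g(x)=x^\ell+a_{\ell-1}x^{\ell-1}+\cdots+a_0$, let $K$ be a splitting field of $g$ over $\mathbb{Q}_p$ with ramification index $e$ and uniformizer $\pi$. If $e<p-1$ and every root $\beta$ of $g(x)$ in $K$ satisfies $\beta\equiv 1\pmod{\pi}$, then $s(n)_{n\ge0}$ can be interpolated to $\mathbb{Z}_p$, i.e. there is a continuous function $t:\mathbb{Z}_p\to K$ with $s(n)=t(n)$ for all $n\ge 0$.
   Context: For a finite extension $K/\mathbb{Q}_p$, $|\cdot|_p$ is the unique extension of the $p$-adic absolute value, the valuation $\nu_p$ ($|x|_p=p^{-\nu_p(x)}$) has image $\frac1e\mathbb Z$ on $K^\times$ where $e$ is the ramification index, and a uniformizer is an element $\pi$ with $\nu_p(\pi)=1/e$. Congruence modulo $\pi$ is in $\mathcal O_K=\{x\in K:|x|_p\le1\}$. *)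

(* A finite extension K of Q_p is modelled abstractly as a
   field K equipped with an absolute value |.| : K -> R (R a realType) which
   is non-archimedean, normalized by |p| = 1/p, and complete.  Inside such K,
   the closure of Q is (a copy of) Q_p and the closure of Z is Z_p. *)
From HB Require Import structures.
From mathcomp Require Import all_boot all_order all_algebra.
From mathcomp Require Import reals.
Set Implicit Arguments. Unset Strict Implicit. Unset Printing Implicit Defensive.
Import Order.TTheory GRing.Theory Num.Theory.
Local Open Scope ring_scope.

Section Defs.
Variables (R : realType) (K : fieldType) (abs : K -> R).

Definition ultrametric_abs : Prop :=
  [/\ forall x, abs x = 0 <-> x = 0,
      forall x, 0 <= abs x,
      forall x y, abs (x * y) = abs x * abs y &
      forall x y, abs (x + y) <= Num.max (abs x) (abs y)].

Definition padic_normalized (p : nat) : Prop := abs p%:R = (p%:R)^-1.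

Definition abs_complete : Prop :=
  forall u : nat -> K,
    (forall eps : R, 0 < eps -> exists N, forall m n, (N <= m)%N -> (N <= n)%N ->
        abs (u m - u n) < eps) ->
    exists l : K, forall eps : R, 0 < eps -> exists N, forall n, (N <= n)%N ->
        abs (u n - l) < eps.

Definition in_Qp (x : K) : Prop :=
  forall eps : R, 0 < eps -> exists q : rat, abs (x - ratr q) < eps.
Definition in_Zp (x : K) : Prop :=
  forall eps : R, 0 < eps -> exists z : int, abs (x - z%:~R) < eps.

Definition subfield_closed (S : K -> Prop) : Prop :=
  [/\ S 0, S 1,
      forall x y, S x -> S y -> S (x - y),
      forall x y, S x -> S y -> S (x * y) &
      forall x, S x -> S x^-1].

Definition splitting_field_over_Qp (g : {poly K}) : Prop :=
  (exists rs : seq K, g = \prod_(r <- rs) ('X - r%:P)) /\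
  (forall S : K -> Prop, subfield_closed S ->
     (forall x, in_Qp x -> S x) -> (forall r, root g r -> S r) ->
     forall x, S x).

(* ramification index e and uniformizer pi: the value group is generated
   by |pi| and |pi|^e = |p| = 1/p, i.e. nu_p(K^x) = (1/e)Z, nu_p(pi) = 1/e *)
Definition ramification_uniformizer (p e : nat) (pi : K) : Prop :=
  abs pi ^+ e = (p%:R)^-1 /\
  forall x, x != 0 -> exists k : int, abs x = abs pi ^ k.

Definition continuous_on_Zp (t : K -> K) : Prop :=
  forall x, in_Zp x -> forall eps : R, 0 < eps ->
    exists2 delta : R, 0 < delta &
      forall y, in_Zp y -> abs (y - x) < delta -> abs (t y - t x) < eps.

End Defs.

(* Write Delta = E - 1 for the forward difference of sequences.  Since g(E)
   kills s, so does h(Delta) with h(x) = g(x + 1), whose roots beta - 1 have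
   absolute value at most |pi| < 1.  Hence all non-leading coefficients of the
   monic h have absolute value at most |pi|, and the recurrences
   h(Delta) Delta^k s = 0 with the ultrametric inequality give
   |Delta^n s(m)| <= |pi|^(n / (deg h + 1)).  So Delta^n s(0) tends to 0 and
   the Mahler series t(x) = sum_n binom(x, n) Delta^n s(0) converges uniformly
   on Z_p, where |binom(x, n)| <= 1, to a continuous function; by Newton's
   forward difference formula it agrees with s on N. *)
From HB Require Import structures.
From mathcomp Require Import all_boot all_order all_algebra.
From mathcomp Require Import reals.
From mathcomp Require Import ring zify.
From Stdlib Require Import ClassicalEpsilon.
Set Implicit Arguments. Unset Strict Implicit. Unset Printing Implicit Defensive.
Import Order.TTheory GRing.Theory Num.Theory.
Local Open Scope ring_scope.

Section Ultrametric.
Variables (R : realType) (K : fieldType) (abs : K -> R).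
Hypothesis abs_ultra : ultrametric_abs abs.

Definition abs_cvg (u : nat -> K) (l : K) : Prop :=
  forall eps : R, 0 < eps -> exists N, forall n, (N <= n)%N -> abs (u n - l) < eps.

Lemma abs_eq0 x : abs x = 0 <-> x = 0. Proof. by case: abs_ultra. Qed.

Lemma abs_ge0 x : 0 <= abs x. Proof. by case: abs_ultra. Qed.

Lemma absM x y : abs (x * y) = abs x * abs y. Proof. by case: abs_ultra. Qed.

Lemma abs_add_le x y c : abs x <= c -> abs y <= c -> abs (x + y) <= c.
Proof.
case: abs_ultra => _ _ _ abs_max ? ?.
by apply: le_trans (abs_max x y) _; rewrite ge_max; apply/andP.
Qed.

Lemma abs_add_lt x y c : abs x < c -> abs y < c -> abs (x + y) < c.
Proof.
case: abs_ultra => _ _ _ abs_max ? ?.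
by apply: le_lt_trans (abs_max x y) _; rewrite gt_max; apply/andP.
Qed.

Lemma abs0 : abs 0 = 0. Proof. exact/abs_eq0. Qed.

Lemma abs_gt0 x : x != 0 -> 0 < abs x.
Proof. by move=> x_neq0; rewrite lt_def abs_ge0 andbT; apply: contra_neq x_neq0 => /abs_eq0. Qed.

Lemma abs1 : abs 1 = 1.
Proof.
have abs11 := absM 1 1; rewrite mulr1 in abs11.
by apply: (mulfI (lt0r_neq0 (abs_gt0 (oner_neq0 K)))); rewrite mulr1 -abs11.
Qed.

Lemma absN x : abs (- x) = abs x.
Proof.
have absN1 : abs (-1) = 1.
  apply/eqP; rewrite -(sqrp_eq1 (abs_ge0 _)).
  by rewrite expr2 -absM mulrNN mulr1 abs1.
by rewrite -mulN1r absM absN1 mul1r.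
Qed.

Lemma absX x n : abs (x ^+ n) = abs x ^+ n.
Proof. by elim: n => [|n IHn]; rewrite ?expr0 ?abs1 // !exprS absM IHn. Qed.

Lemma absV x : abs x^-1 = (abs x)^-1.
Proof.
have [->|x_neq0] := eqVneq x 0; first by rewrite invr0 abs0 invr0.
apply: (mulfI (lt0r_neq0 (abs_gt0 x_neq0))).
by rewrite -absM !mulfV ?abs1 // lt0r_neq0 // abs_gt0.
Qed.

Lemma abs_nat_le1 n : abs n%:R <= 1.
Proof.
elim: n => [|n IHn]; first by rewrite abs0 ler01.
by rewrite -natr1 abs_add_le // abs1.
Qed.

Lemma abs_int_le1 (z : int) : abs z%:~R <= 1.
Proof. by case: z => n; rewrite ?NegzE ?intrN ?absN abs_nat_le1. Qed.

Lemma abs_sum_le (I : Type) (r : seq I) (P : pred I) (F : I -> K) c :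
  0 <= c -> (forall i, P i -> abs (F i) <= c) -> abs (\sum_(i <- r | P i) F i) <= c.
Proof.
move=> c_ge0 F_le; elim/big_rec: _ => [|i x Pi x_le]; first by rewrite abs0.
exact: abs_add_le (F_le _ Pi) x_le.
Qed.

Lemma abs_sum_lt (I : Type) (r : seq I) (P : pred I) (F : I -> K) c :
  0 < c -> (forall i, P i -> abs (F i) < c) -> abs (\sum_(i <- r | P i) F i) < c.
Proof.
move=> c_gt0 F_lt; elim/big_rec: _ => [|i x Pi x_lt]; first by rewrite abs0.
exact: abs_add_lt (F_lt _ Pi) x_lt.
Qed.

Lemma abs_prod_le1 (I : Type) (r : seq I) (F : I -> K) :
  (forall i, abs (F i) <= 1) -> abs (\prod_(i <- r) F i) <= 1.
Proof.
move=> F_le1; elim/big_rec: _ => [|i x _ x_le1]; first by rewrite abs1.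
by rewrite absM -[1]mulr1 ler_pM ?abs_ge0.
Qed.

Lemma abs_eq0_small x : (forall eps : R, 0 < eps -> abs x < eps) -> x = 0.
Proof.
move=> x_small; apply/abs_eq0/eqP; rewrite eq_le abs_ge0 andbT leNgt.
by apply/negP => /x_small; rewrite ltxx.
Qed.

Lemma abs_fact_le n k : abs (n + k)`!%:R <= abs n`!%:R.
Proof.
elim: k => [|k IHk]; first by rewrite addn0.
by rewrite addnS factS natrM absM (le_trans _ IHk) // ler_piMl ?abs_ge0 ?abs_nat_le1.
Qed.

End Ultrametric.

Lemma bernoulli_ineq (R : numDomainType) (d : R) n : 0 <= d -> 1 + n%:R * d <= (1 + d) ^+ n.
Proof.
move=> d_ge0; elim: n => [|n IHn]; first by rewrite mul0r addr0 expr0.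
rewrite exprSr (le_trans _ (ler_wpM2r _ IHn)) ?addr_ge0 //.
rewrite mulrDr mulr1 mulrDl mul1r -natr1 mulrDl mul1r addrA.
by rewrite lerD2l lerDl !mulr_ge0.
Qed.

Lemma expr_lt_small (R : archiRealFieldType) (r eps : R) :
  0 <= r -> r < 1 -> 0 < eps -> exists k, r ^+ k < eps.
Proof.
move=> r_ge0 r_lt1 eps_gt0; have [->|r_neq0] := eqVneq r 0; first by exists 1%N; rewrite expr1.
have r_gt0 : 0 < r by rewrite lt_def r_neq0.
pose d := r^-1 - 1; have d_gt0 : 0 < d by rewrite subr_gt0 invf_gt1.
pose k := Num.bound (eps^-1 / d); exists k.
have k_big : eps^-1 / d < k%:R by apply: archi_boundP; rewrite divr_ge0 // ?invr_ge0 ltW.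
have pos : 0 < 1 + k%:R * d by rewrite ltr_pwDl // mulr_ge0 // ltW.
have r_inv : r = (1 + d)^-1 by rewrite /d addrC subrK invrK.
have bern := bernoulli_ineq k (ltW d_gt0).
rewrite r_inv exprVn -[eps]invrK ltf_pV2 ?posrE ?invr_gt0 ?(lt_le_trans pos bern) //.
apply: lt_le_trans bern; apply: lt_trans (_ : k%:R * d < _); last by rewrite ltrDr.
by rewrite -ltr_pdivrMr.
Qed.

Lemma expr_div_small (R : archiRealFieldType) (r eps : R) (d : nat) : (0 < d)%N ->
  0 <= r -> r < 1 -> 0 < eps -> exists N0, forall n, (N0 <= n)%N -> r ^+ (n %/ d) < eps.
Proof.
move=> d_gt0 r_ge0 r_lt1 eps_gt0; have [k rk_lt] := expr_lt_small r_ge0 r_lt1 eps_gt0.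
exists (k * d)%N => n n_ge; apply: le_lt_trans rk_lt.
by rewrite ler_wiXn2l ?(ltW r_lt1) // -(mulnK k d_gt0) leq_div2r.
Qed.

Section PadicNormalized.
Variables (R : realType) (K : fieldType) (abs : K -> R) (p : nat).
Hypotheses (p_pr : prime p) (abs_ultra : ultrametric_abs abs)
  (abs_p : padic_normalized abs p).

Let p_gt1 : 1 < p%:R :> R. Proof. by rewrite ltr1n prime_gt1. Qed.
Let invp_gt0 : 0 < (p%:R : R)^-1. Proof. by rewrite invr_gt0 (lt_trans ltr01). Qed.
Let invp_lt1 : (p%:R : R)^-1 < 1. Proof. by rewrite invf_lt1 // (lt_trans ltr01). Qed.

(* In characteristic q the Frobenius fixes p%:R, so (1/p)^q = 1/p. *)
Lemma natr_neq0 n : (0 < n)%N -> n%:R != 0 :> K.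
Proof.
move=> n_gt0; apply/negP => /(natf0_pchar n_gt0) [q q_char].
have q_gt0 := prime_gt0 (pcharf_prime q_char).
have := pFrobenius_aut_nat q_char p; rewrite pFrobenius_autE => /(congr1 abs).
rewrite absX // abs_p -(prednK q_gt0) exprSr => frob.
have := mulIf (lt0r_neq0 invp_gt0) (etrans frob (esym (mul1r _))).
move/eqP; rewrite pexprn_eq1 ?(ltW invp_gt0) // (lt_eqF invp_lt1) orbF => /eqP q1.
by have := prime_gt1 (pcharf_prime q_char); rewrite -(prednK q_gt0) q1.
Qed.

Lemma abs_fact_gt0 n : 0 < abs n`!%:R.
Proof. by rewrite abs_gt0 // natr_neq0 // fact_gt0. Qed.

Lemma in_Zp_le1 x : in_Zp abs x -> abs x <= 1.
Proof.
case/(_ 1 ltr01) => z z_near; rewrite -(subrK z%:~R x).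
by rewrite abs_add_le ?(ltW z_near) ?abs_int_le1.
Qed.

Lemma nat_in_Zp n : in_Zp abs n%:R.
Proof. by move=> eps eps_gt0; exists n%:Z; rewrite subrr abs0. Qed.

(* A negative integer -n is p-adically close to the natural number (p^j - 1) n. *)
Lemma in_Zp_near_nat x eps : in_Zp abs x -> 0 < eps -> exists m : nat, abs (x - m%:R) < eps.
Proof.
move=> x_Zp eps_gt0; have [[n|n] z_near] := x_Zp eps eps_gt0; first by exists n.
have [j pj_small] := expr_lt_small (ltW invp_gt0) invp_lt1 eps_gt0.
have le_pn : (n.+1 <= p ^ j.+1 * n.+1)%N by rewrite leq_pmull // expn_gt0 prime_gt0.
exists (p ^ j.+1 * n.+1 - n.+1)%N; rewrite NegzE intrN in z_near.
have -> : x - (p ^ j.+1 * n.+1 - n.+1)%N%:R = (x - - n.+1%:R) - (p ^ j.+1 * n.+1)%:R.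
  by rewrite natrB //; ring.
apply: abs_add_lt => //; rewrite absN // natrM natrX absM // absX // abs_p.
apply: le_lt_trans pj_small.
rewrite (le_trans (ler_piMr (exprn_ge0 _ (ltW invp_gt0)) (abs_nat_le1 abs_ultra _))) //.
by rewrite ler_wiXn2l // ltW.
Qed.

Lemma uniformizer_abs_lt1 e pi : ramification_uniformizer abs p e pi -> abs pi < 1.
Proof.
case=> pi_e _; rewrite ltNge; apply/negP => /(exprn_ege1 e).
by rewrite pi_e => /(lt_le_trans invp_lt1); rewrite ltxx.
Qed.

End PadicNormalized.

(* [shift_op q s m] is (q(E) s)(m), where E is the shift operator on sequences. *)
Section ShiftOperator.
Variable K : comNzRingType.
Implicit Types (p q : {poly K}) (s : nat -> K).

Definition shift_op q s m : K := \sum_(i < size q) q`_i * s (m + i)%N.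

Lemma shift_op_widen q s m N : (size q <= N)%N ->
  shift_op q s m = \sum_(i < N) q`_i * s (m + i)%N.
Proof.
move=> le_qN; rewrite /shift_op (big_ord_widen _ (fun i => q`_i * s (m + i)%N) le_qN).
rewrite big_mkcond; apply: eq_bigr => i _.
by case: ifPn => // /negbTE; rewrite ltnNge => /negbFE/(nth_default 0) ->; rewrite mul0r.
Qed.

Lemma shift_op_lin c p q s m :
  shift_op (c *: p + q) s m = c * shift_op p s m + shift_op q s m.
Proof.
pose N := maxn (size p) (size q).
have le_pN : (size p <= N)%N by rewrite leq_maxl.
have le_qN : (size q <= N)%N by rewrite leq_maxr.
have le_pqN : (size (c *: p + q)%R <= N)%N.
  apply: leq_trans (size_polyD _ _) _; rewrite geq_max le_qN andbT.
  exact: leq_trans (size_scale_leq _ _) le_pN.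
rewrite !(shift_op_widen _ _ le_pqN, shift_op_widen _ _ le_pN, shift_op_widen _ _ le_qN).
rewrite mulr_sumr -big_split; apply: eq_bigr => i _.
by rewrite coefD coefZ mulrDl mulrA.
Qed.

Lemma shift_op0 s m : shift_op 0 s m = 0.
Proof. by rewrite /shift_op size_poly0 big_ord0. Qed.

Lemma shift_opD p q s m : shift_op (p + q) s m = shift_op p s m + shift_op q s m.
Proof. by have := shift_op_lin 1 p q s m; rewrite scale1r mul1r. Qed.

Lemma shift_opZ c p s m : shift_op (c *: p) s m = c * shift_op p s m.
Proof. by have := shift_op_lin c p 0 s m; rewrite !addr0 shift_op0 addr0. Qed.

Lemma shift_opB p q s m : shift_op (p - q) s m = shift_op p s m - shift_op q s m.
Proof. by rewrite shift_opD -scaleN1r shift_opZ mulN1r. Qed.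

Lemma shift_op_sum (I : Type) (r : seq I) (F : I -> {poly K}) s m :
  shift_op (\sum_(i <- r) F i) s m = \sum_(i <- r) shift_op (F i) s m.
Proof. by elim/big_rec2: _ => [|i q x _ <-]; rewrite ?shift_op0 ?shift_opD. Qed.

Lemma shift_opXM q s m : shift_op ('X * q) s m = shift_op q s m.+1.
Proof.
have le_size : (size ('X * q)%R <= (size q).+1)%N.
  by have [->|q_neq0] := eqVneq q 0; rewrite ?mulr0 ?size_poly0 // mulrC size_mulX.
rewrite (shift_op_widen _ _ le_size) big_ord_recl coefXM mul0r add0r.
by apply: eq_bigr => i _; rewrite coefXM addSnnS.
Qed.

Lemma shift_opXn i s m : shift_op 'X^i s m = s (m + i)%N.
Proof.
rewrite /shift_op size_polyXn big_ord_recr /= coefXn eqxx mul1r big1 ?add0r // => j _.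
by rewrite coefXn ltn_eqF ?mul0r.
Qed.

Lemma shift_op_annihilator g s :
  (forall m, shift_op g s m = 0) -> forall q m, shift_op (q * g) s m = 0.
Proof.
move=> g_ann; elim/poly_ind => [|q c IHq] m; first by rewrite mul0r shift_op0.
rewrite mulrDl mul_polyC -mulrA mulrC -mulrA shift_opD shift_opXM mulrC IHq.
by rewrite shift_opZ g_ann mulr0 addr0.
Qed.

Lemma shift_op_rec l (a s : nat -> K) :
  (forall n, s (n + l)%N + \sum_(i < l) a i * s (n + i)%N = 0) ->
  forall m, shift_op ('X^l + \sum_(i < l) a i *: 'X^i) s m = 0.
Proof.
move=> s_rec m; rewrite shift_opD shift_op_sum shift_opXn -[RHS](s_rec m).
by congr (_ + _); apply: eq_bigr => i _; rewrite shift_opZ shift_opXn.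
Qed.

Definition fdiff s n m : K := shift_op (('X - 1) ^+ n) s m.

Lemma fdiff0 s m : fdiff s 0 m = s m.
Proof. by rewrite /fdiff expr0 -(expr0 'X) shift_opXn addn0. Qed.

Lemma fdiffS s n m : fdiff s n.+1 m = fdiff s n m.+1 - fdiff s n m.
Proof. by rewrite /fdiff exprS mulrBl mul1r shift_opB shift_opXM. Qed.

Lemma newton_forward s m : s m = \sum_(i < m.+1) 'C(m, i)%:R * fdiff s i 0.
Proof.
rewrite -[m in LHS]add0n -shift_opXn -{1}(subrK 1 'X) exprD1n shift_op_sum.
by apply: eq_bigr => i _; rewrite -scaler_nat shift_opZ.
Qed.

Lemma fdiff_annihilator h s :
  (forall m, shift_op (h \Po ('X - 1)) s m = 0) ->
  forall k m, \sum_(i < size h) h`_i * fdiff s (k + i) m = 0.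
Proof.
move=> h_ann k m; rewrite -[RHS](shift_op_annihilator h_ann (('X - 1) ^+ k) m).
rewrite comp_polyE mulr_sumr shift_op_sum; apply: eq_bigr => i _.
by rewrite -scalerAr -exprD shift_opZ.
Qed.

End ShiftOperator.

Lemma prod_XsubC_comp_subX1 (K : comNzRingType) (rs : seq K) :
  \prod_(r <- rs) ('X - r%:P) = (\prod_(r <- rs) ('X - (r - 1)%:P)) \Po ('X - 1).
Proof.
elim: rs => [|r rs IHrs]; first by rewrite !big_nil comp_polyC.
rewrite !big_cons comp_polyM -IHrs comp_polyB comp_polyX comp_polyC.
by rewrite polyCB polyC1 opprB addrA subrK.
Qed.

Section Decay.
Variables (R : realType) (K : fieldType) (abs : K -> R).
Hypothesis abs_ultra : ultrametric_abs abs.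
Variable rho : R.
Hypotheses (rho_ge0 : 0 <= rho) (rho_le1 : rho <= 1).

Lemma coef_prod_XsubC_le (cs : seq K) : (forall c, c \in cs -> abs c <= rho) ->
  forall i, abs (\prod_(c <- cs) ('X - c%:P))`_i <= if (i < size cs)%N then rho else 1.
Proof.
have rho_le i n : rho <= if (i < n)%N then rho else 1 by case: ifP.
elim: cs => [|c cs IHcs] cs_le i.
  by rewrite big_nil coefC; case: (i == 0)%N; rewrite ?abs1 ?abs0 ?ler01.
have c_le : abs c <= rho by apply: cs_le; rewrite inE eqxx.
have {}IHcs := IHcs (fun c' c'_in => cs_le c' (mem_behead (s := c :: cs) c'_in)).
have cP_le j : abs (c * (\prod_(c <- cs) ('X - c%:P))`_j) <= rho.
  have P_le1 : abs (\prod_(c <- cs) ('X - c%:P))`_j <= 1.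
    by apply: le_trans (IHcs j) _; case: ifP.
  rewrite absM //; apply: le_trans (ler_wpM2l (abs_ge0 abs_ultra _) P_le1) _.
  by rewrite mulr1.
rewrite big_cons mulrBl coefB coefXM coefCM; case: i => [|i] /=.
  by rewrite sub0r absN.
apply: (abs_add_le abs_ultra); first exact: IHcs.
by rewrite absN //; apply: le_trans (cP_le _) (rho_le _ _).
Qed.

(* Strong induction: D n is a combination of D (n - L), ..., D (n - 1) with
   coefficients of absolute value at most rho. *)
Lemma rec_decay (h : {poly K}) (D : nat -> nat -> K) :
  h \is monic -> (forall i, (i < (size h).-1)%N -> abs h`_i <= rho) ->
  (forall n m, abs (D n m) <= 1) ->
  (forall k m, \sum_(i < size h) h`_i * D (k + i)%N m = 0) ->
  forall n m, abs (D n m) <= rho ^+ (n %/ size h).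
Proof.
move=> h_monic h_le D_le1 D_rec.
have [L h_size] : exists L, size h = L.+1.
  by exists (size h).-1; rewrite prednK // size_poly_gt0 monic_neq0.
have h_lead : h`_L = 1 by have := monicP h_monic; rewrite lead_coefE h_size.
rewrite h_size /= in h_le D_rec *; elim/ltn_ind => n IHn m.
have [n_lt|n_ge] := ltnP n L; first by rewrite divn_small ?expr0 // ltnS ltnW.
have := D_rec (n - L)%N m; rewrite big_ord_recr /= h_lead mul1r subnK // addrC.
move/eqP; rewrite addr_eq0 => /eqP ->; rewrite absN //.
apply: (abs_sum_le abs_ultra) => [|i _]; first exact: exprn_ge0.
have i_lt := ltn_ord i; have lt_n : (n - L + i < n)%N by lia.
have term_le := ler_pM (abs_ge0 abs_ultra _) (abs_ge0 abs_ultra _) (h_le i i_lt) (IHn _ lt_n m).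
rewrite absM //; apply: le_trans term_le _.
rewrite -exprS ler_wiXn2l // -[(_ %/ _).+1]addn1 -(divnDMl 1 _ (ltn0Sn L)) mul1n.
by rewrite leq_div2r //; lia.
Qed.

Lemma fdiff_le1 (s : nat -> K) : (forall n, abs (s n) <= 1) ->
  forall n m, abs (fdiff s n m) <= 1.
Proof.
move=> s_le1; elim=> [|n IHn] m; first by rewrite fdiff0.
by rewrite fdiffS; apply: abs_add_le; rewrite ?absN.
Qed.

End Decay.

Lemma fdiff_cvg0 (R : realType) (K : fieldType) (abs : K -> R) (rho : R)
  (rs : seq K) (s : nat -> K) :
  ultrametric_abs abs -> 0 <= rho -> rho < 1 ->
  (forall r, r \in rs -> abs (r - 1) <= rho) -> (forall n, abs (s n) <= 1) ->
  (forall m, shift_op (\prod_(r <- rs) ('X - r%:P)) s m = 0) ->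
  abs_cvg abs (fun n => fdiff s n 0) 0.
Proof.
move=> abs_ultra rho_ge0 rho_lt1 rs_near1 s_le1 s_ann eps eps_gt0.
pose h := \prod_(c <- [seq r - 1 | r <- rs]) ('X - c%:P).
have h_coef i : (i < (size h).-1)%N -> abs h`_i <= rho.
  have cs_le : forall c, c \in [seq r - 1 | r <- rs] -> abs c <= rho.
    by move=> _ /mapP[r r_in ->]; apply: rs_near1.
  rewrite size_prod_XsubC /= => i_lt.
  by have := coef_prod_XsubC_le abs_ultra (ltW rho_lt1) cs_le i; rewrite i_lt.
have h_ann m : shift_op (h \Po ('X - 1)) s m = 0.
  by rewrite /h big_map -prod_XsubC_comp_subX1.
have decay := rec_decay abs_ultra rho_ge0 (ltW rho_lt1) (monic_prod_XsubC _ _ _)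
  h_coef (fdiff_le1 abs_ultra s_le1) (fdiff_annihilator h_ann).
have h_size_gt0 : (0 < size h)%N by rewrite size_prod_XsubC.
have [N0 small] := expr_div_small h_size_gt0 rho_ge0 rho_lt1 eps_gt0.
by exists N0 => n N0_le; rewrite subr0 (le_lt_trans (decay n 0%N)) ?small.
Qed.

Lemma prod_subr_nat (K : nzRingType) n m :
  \prod_(i < n) (m%:R - i%:R) = (m ^_ n)%:R :> K.
Proof.
elim: n m => [|n IHn] [|m]; rewrite ?big_ord0 ?ffactn0 // big_ord_recl subr0 ?mul0r //.
rewrite ffactSS natrM -IHn; congr (_ * _); apply: eq_bigr => i _.
by rewrite lift0 -!natr1 opprD addrACA subrr addr0.
Qed.

Definition binom (K : fieldType) (x : K) n : K := (\prod_(i < n) (x - i%:R)) / n`!%:R.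

Lemma binom_nat (K : fieldType) m n : n`!%:R != 0 :> K -> binom (m%:R : K) n = 'C(m, n)%:R.
Proof. by move=> fact_neq0; rewrite /binom prod_subr_nat -bin_ffact natrM mulfK. Qed.

Section BinomialBounds.
Variables (R : realType) (K : fieldType) (abs : K -> R) (p : nat).
Hypotheses (p_pr : prime p) (abs_ultra : ultrametric_abs abs)
  (abs_p : padic_normalized abs p).

Lemma prod_subr_lipschitz x y n : abs x <= 1 -> abs y <= 1 ->
  abs (\prod_(i < n) (y - i%:R) - \prod_(i < n) (x - i%:R)) <= abs (y - x).
Proof.
move=> x_le1 y_le1.
have sub_le1 z i : abs z <= 1 -> abs (z - i%:R) <= 1.
  by move=> z_le1; apply: abs_add_le; rewrite ?absN ?abs_nat_le1.
elim: n => [|n IHn]; first by rewrite !big_ord0 subrr abs0 ?abs_ge0.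
rewrite !big_ord_recr /=; set Py := \prod_(i < n) _; set Px := \prod_(i < n) _.
have -> : Py * (y - n%:R) - Px * (x - n%:R) = (Py - Px) * (y - n%:R) + Px * (y - x) by ring.
apply: abs_add_le => //; rewrite absM //.
  by apply: le_trans (ler_wpM2l (abs_ge0 abs_ultra _) (sub_le1 _ _ y_le1)) _; rewrite mulr1.
apply: le_trans (ler_wpM2r (abs_ge0 abs_ultra _) (_ : _ <= 1)) _; last by rewrite mul1r.
by apply: abs_prod_le1 => // i; apply: sub_le1.
Qed.

Lemma binom_lipschitz x y n : abs x <= 1 -> abs y <= 1 ->
  abs (binom y n - binom x n) <= abs (y - x) / abs n`!%:R.
Proof.
move=> x_le1 y_le1; rewrite /binom -mulrBl absM // absV //.
by rewrite ler_wpM2r ?invr_ge0 ?abs_ge0 ?prod_subr_lipschitz.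
Qed.

(* Approximating x by m : nat up to |n!|, binom x n is within distance < 1 of
   the integer 'C(m, n). *)
Lemma binom_le1 x n : in_Zp abs x -> abs (binom x n) <= 1.
Proof.
move=> x_Zp; have absfact_gt0 := abs_fact_gt0 p_pr abs_ultra abs_p n.
have [m m_near] := in_Zp_near_nat p_pr abs_ultra abs_p x_Zp absfact_gt0.
rewrite -(subrK (binom m%:R n) (binom x n)); apply: abs_add_le => //; last first.
  by rewrite binom_nat ?abs_nat_le1 // (natr_neq0 p_pr abs_ultra abs_p) // fact_gt0.
have x_le1 := in_Zp_le1 abs_ultra x_Zp.
apply: le_trans (binom_lipschitz n (abs_nat_le1 abs_ultra m) x_le1) _.
by rewrite ler_pdivrMr // mul1r ltW.
Qed.

End BinomialBounds.

Section Mahler.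
Variables (R : realType) (K : fieldType) (abs : K -> R) (p : nat).
Hypotheses (p_pr : prime p) (abs_ultra : ultrametric_abs abs)
  (abs_p : padic_normalized abs p) (abs_compl : abs_complete abs).
Variable c : nat -> K.
Hypotheses (c_le1 : forall n, abs (c n) <= 1) (c_cvg0 : abs_cvg abs c 0).

Definition mahler_sum N x : K := \sum_(0 <= n < N) binom x n * c n.

Lemma mahler_sum_cauchy eps : 0 < eps -> exists N0, forall x, in_Zp abs x ->
  forall N M, (N0 <= N)%N -> (N <= M)%N -> abs (mahler_sum M x - mahler_sum N x) < eps.
Proof.
move=> eps_gt0; have [N0 c_small] := c_cvg0 eps_gt0; exists N0 => x x_Zp N M N0_le N_le.
rewrite /mahler_sum (big_cat_nat (leq0n N) N_le) /= addrAC subrr add0r big_nat_cond.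
apply: (abs_sum_lt abs_ultra) => // n /andP[/andP[N_le_n _] _].
have binom_le := binom_le1 p_pr abs_ultra abs_p n x_Zp.
rewrite absM //; apply: le_lt_trans (ler_piMl (abs_ge0 abs_ultra _) binom_le) _.
by rewrite -[c n]subr0 c_small // (leq_trans N0_le).
Qed.

Definition mahler x : K := epsilon (inhabits 0) (abs_cvg abs (mahler_sum^~ x)).

Lemma mahler_sum_cvg x : in_Zp abs x -> abs_cvg abs (mahler_sum^~ x) (mahler x).
Proof.
move=> x_Zp; apply: epsilon_spec; apply: abs_compl => eps eps_gt0.
have [N0 cauchy] := mahler_sum_cauchy eps_gt0; exists N0 => m n N0_le_m N0_le_n.
have -> : mahler_sum m x - mahler_sum n x =
  (mahler_sum m x - mahler_sum N0 x) - (mahler_sum n x - mahler_sum N0 x) by ring.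
by apply: abs_add_lt; rewrite ?absN ?cauchy.
Qed.

Lemma mahler_sum_approx eps : 0 < eps -> exists N0, forall x, in_Zp abs x ->
  forall N, (N0 <= N)%N -> abs (mahler x - mahler_sum N x) < eps.
Proof.
move=> eps_gt0; have [N0 cauchy] := mahler_sum_cauchy eps_gt0; exists N0 => x x_Zp N N0_le.
have [N1 cvg_N1] := mahler_sum_cvg x_Zp eps_gt0; pose M := maxn N N1.
have -> : mahler x - mahler_sum N x =
  - (mahler_sum M x - mahler x) + (mahler_sum M x - mahler_sum N x) by ring.
apply: abs_add_lt; rewrite ?absN ?cvg_N1 ?leq_maxr //.
by rewrite cauchy ?leq_maxl.
Qed.

Lemma mahler_sum_lipschitz N x y : in_Zp abs x -> in_Zp abs y ->
  abs (mahler_sum N y - mahler_sum N x) <= abs (y - x) / abs N`!%:R.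
Proof.
move=> x_Zp y_Zp; rewrite /mahler_sum -sumrB big_nat_cond.
apply: (abs_sum_le abs_ultra) => [|n /andP[/andP[_ n_lt] _]].
  by rewrite divr_ge0 ?abs_ge0.
rewrite -mulrBl absM //; apply: le_trans (ler_piMr (abs_ge0 abs_ultra _) (c_le1 n)) _.
have [x_le1 y_le1] := (in_Zp_le1 abs_ultra x_Zp, in_Zp_le1 abs_ultra y_Zp).
apply: le_trans (binom_lipschitz abs_ultra n x_le1 y_le1) _.
rewrite ler_wpM2l ?abs_ge0 // lef_pV2 ?posrE ?(abs_fact_gt0 p_pr abs_ultra abs_p) //.
by have := abs_fact_le abs_ultra n (N - n); rewrite subnKC // ltnW.
Qed.

Lemma mahler_continuous : continuous_on_Zp abs mahler.
Proof.
move=> x x_Zp eps eps_gt0; have [N approx] := mahler_sum_approx eps_gt0.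
have fact_gt0 := abs_fact_gt0 p_pr abs_ultra abs_p N.
exists (eps * abs N`!%:R) => [|y y_Zp yx_lt]; first by rewrite mulr_gt0.
have -> : mahler y - mahler x = (mahler y - mahler_sum N y) +
  (mahler_sum N y - mahler_sum N x) - (mahler x - mahler_sum N x) by ring.
apply: abs_add_lt; rewrite ?absN ?approx //.
apply: abs_add_lt; rewrite ?approx //.
by apply: le_lt_trans (mahler_sum_lipschitz _ x_Zp y_Zp) _; rewrite ltr_pdivrMr.
Qed.

Lemma mahler_sum_nat N m : (m < N)%N ->
  mahler_sum N m%:R = \sum_(i < m.+1) 'C(m, i)%:R * c i.
Proof.
have binom_natE n : binom (m%:R : K) n = 'C(m, n)%:R.
  by rewrite binom_nat // (natr_neq0 p_pr abs_ultra abs_p) // fact_gt0.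
move=> m_lt; rewrite /mahler_sum (big_cat_nat (leq0n m.+1) m_lt) /= big_mkord.
rewrite [X in _ + X]big_nat_cond [X in _ + X]big1 ?addr0.
  by apply: eq_bigr => i _; rewrite binom_natE.
by move=> n /andP[/andP[m_lt_n _] _]; rewrite binom_natE bin_small ?mul0r.
Qed.

Lemma mahler_nat m : mahler m%:R = \sum_(i < m.+1) 'C(m, i)%:R * c i.
Proof.
apply/eqP; rewrite -subr_eq0; apply/eqP/(abs_eq0_small abs_ultra) => eps eps_gt0.
have [N0 approx] := mahler_sum_approx eps_gt0.
rewrite -(mahler_sum_nat (ltn_addl N0 (ltnSn m))) approx // ?leq_addr //.
exact: nat_in_Zp.
Qed.

End Mahler.

Unset Implicit Arguments.

Theorem corollary3p6 (R : realType) (K : fieldType) (abs : K -> R) (p : nat)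
  (l : nat) (a : nat -> K) (s : nat -> K) (e : nat) (pi : K) :
  prime p ->
  ultrametric_abs abs -> padic_normalized abs p -> abs_complete abs ->
  (forall i, (i < l)%N -> in_Zp abs (a i)) ->
  (forall n, in_Zp abs (s n)) ->
  (forall n, s (n + l)%N + \sum_(i < l) a i * s (n + i)%N = 0) ->
  splitting_field_over_Qp abs ('X^l + \sum_(i < l) a i *: 'X^i) ->
  ramification_uniformizer abs p e pi ->
  (e < p.-1)%N ->
  (forall beta : K, root ('X^l + \sum_(i < l) a i *: 'X^i) beta ->
     abs (beta - 1) <= abs pi) ->
  exists t : K -> K, continuous_on_Zp abs t /\ forall n : nat, t n%:R = s n.
Proof.
move=> p_pr abs_ultra abs_p abs_compl _ s_Zp s_rec [[rs g_split] _] pi_unif _ roots_near1.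
have pi_lt1 := uniformizer_abs_lt1 p_pr pi_unif.
have rs_near1 r : r \in rs -> abs (r - 1) <= abs pi.
  by move=> r_in; apply: roots_near1; rewrite g_split root_prod_XsubC.
have s_le1 n := in_Zp_le1 abs_ultra (s_Zp n).
have s_ann m : shift_op (\prod_(r <- rs) ('X - r%:P)) s m = 0.
  by rewrite -g_split shift_op_rec.
have c_cvg0 := fdiff_cvg0 abs_ultra (abs_ge0 abs_ultra pi) pi_lt1 rs_near1 s_le1 s_ann.
have c_le1 n : abs (fdiff s n 0) <= 1 by apply: fdiff_le1.
exists (mahler abs (fun n => fdiff s n 0)); split.
  exact: (mahler_continuous p_pr abs_ultra abs_p abs_compl c_le1 c_cvg0).
move=> m; rewrite (mahler_nat p_pr abs_ultra abs_p abs_compl c_cvg0).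
by rewrite -newton_forward.
Qed.
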